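(* Let $a,c\ge 0$ with $a\neq c$, and let $f^*:\{0,1\}^4\to\mathbb{R}_{\ge 0}$ be given by $f^*(0011)=f^*(1100)=a$, $f^*(0101)=f^*(1010)=c$, and $f^*(x)=0$ for all other $x\in\{0,1\}^4$. Then $f^*$ is not windable.
   Context: Windability. For a finite set $J$ and $x\in\{0,1\}^J$, let $\mathcal{M}_x$ be the set of partitions of $\{i\in J: x_i=1\}$ into pairs and at most one singleton. For $x,y\in\{0,1\}^J$, $x\oplus y$ denotes coordinatewise XOR, and for a block $S$ of a partition, $x\oplus S$ denotes the vector obtained from $x$ by replacing $x_i$ with $1-x_i$ for the one or two elements $i\in S$. A function $f:\{0,1\}^J\to\mathbb{R}_{\ge 0}$ is windable if there exist values $B(x,y,M)\ge 0$, for all $x,y\in\{0,1\}^J$ and all $M\in\mathcal{M}_{x\oplus y}$, such that (i) $f(x)f(y)=\sum_{M\in\mathcal{M}_{x\oplus y}}B(x,y,M)$ for all $x,y\in\{0,1\}^J$, and (ii) $B(x,y,M)=B(x\oplus S,y\oplus S,M)$ for all $x,y\in\{0,1\}^J$, all $M\in\mathcal{M}_{x\oplus y}$ and all $S\in M$. Here $J=\{1,2,3,4\}$ and a string $x_1x_2x_3x_4$ denotes the input $(x_1,x_2,x_3,x_4)$. *)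

From HB Require Import structures.
From mathcomp Require Import all_boot all_order all_algebra.
From mathcomp Require Import reals.
Set Implicit Arguments. Unset Strict Implicit. Unset Printing Implicit Defensive.
Import Order.TTheory GRing.Theory Num.Theory.
Local Open Scope ring_scope.

Section Wind.
Variable J : finType.

Definition bvec := {ffun J -> bool}.

Definition bxor (x y : bvec) : bvec := [ffun i => x i (+) y i].

Definition bflip (S : {set J}) (x : bvec) : bvec :=
  [ffun i => if i \in S then ~~ x i else x i].

Definition bsupp (x : bvec) : {set J} := [set i | x i].

Definition is_pairing (x : bvec) (M : {set {set J}}) : bool :=
  [&& partition M (bsupp x),
      [forall S in M, (#|S| == 1)%N || (#|S| == 2)%N] &
      (#|[set S in M | #|S| == 1%N]| <= 1)%N].

Definition windable (R : realType) (f : bvec -> R) : Prop :=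
  exists B : bvec -> bvec -> {set {set J}} -> R,
    [/\ (forall x y M, is_pairing (bxor x y) M -> 0 <= B x y M),
        (forall x y, f x * f y = \sum_(M | is_pairing (bxor x y) M) B x y M) &
        (forall x y M, is_pairing (bxor x y) M ->
           forall S, S \in M -> B x y M = B (bflip S x) (bflip S y) M)].
End Wind.

(* the input string x1x2x3x4, with J = 'I_4 and x_k the coordinate k-1 *)
Definition bits4 (b1 b2 b3 b4 : bool) : bvec 'I_4 :=
  [ffun i : 'I_4 => nth false [:: b1; b2; b3; b4] i].

Definition fstar (R : realType) (a c : R) (x : bvec 'I_4) : R :=
  if (x == bits4 false false true true) || (x == bits4 true true false false) then a
  else if (x == bits4 false true false true) || (x == bits4 true false true false) then c
  else 0.

From HB Require Import structures.
From mathcomp Require Import all_boot all_order all_algebra.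
From mathcomp Require Import reals.
Import Order.TTheory GRing.Theory Num.Theory.
Set Implicit Arguments. Unset Strict Implicit. Unset Printing Implicit Defensive.
Local Open Scope ring_scope.

(* The pairs u = 0011, v = 1100 and u' = 0101, v' = 1010 have the same XOR
   1111, so a^2 = f(u) f(v) and c^2 = f(u') f(v') are sums over the same
   pairings M.  Fix M and let T be its block containing the second coordinate.
   Winding along T gives B(u,v,M) = B(T+u, T+v, M), and this vanishes whenever
   f(T+u) f(T+v) = 0, since that product is a sum of nonnegative B's; the same
   holds for (u',v').  As T has at most two elements, the only block for which
   either product is nonzero is T = {2,3}, and it maps (u,v) to (u',v').  Hence
   B(u,v,M) = B(u',v',M) for every M, and a^2 = c^2. *)

Lemma bxor_bflip (J : finType) (S : {set J}) (x y : bvec J) :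
  bxor (bflip S x) (bflip S y) = bxor x y.
Proof.
by apply/ffunP => i; rewrite !ffunE; case: (i \in S); case: (x i); case: (y i).
Qed.

Section Pairing.
Variables (J : finType) (x : bvec J) (M : {set {set J}}).
Hypothesis pairM : is_pairing x M.

Lemma pairing_block i : x i -> exists2 S, S \in M & i \in S.
Proof.
move=> xi; case/and3P: pairM => /and3P[/eqP coverM _ _] _ _.
have : i \in cover M by rewrite coverM inE.
by case/bigcupP=> S SM iS; exists S.
Qed.

Lemma pairing_card_block S : S \in M -> (#|S| <= 2)%N.
Proof.
case/and3P: pairM => _ /forall_inP cardM _ /cardM.
by case/orP=> /eqP ->.
Qed.

End Pairing.

Section Winding.
Variables (J : finType) (R : numDomainType) (f : bvec J -> R).
Variable B : bvec J -> bvec J -> {set {set J}} -> R.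
Hypothesis B_ge0 : forall x y M, is_pairing (bxor x y) M -> 0 <= B x y M.
Hypothesis fmul_sumB :
  forall x y, f x * f y = \sum_(M | is_pairing (bxor x y) M) B x y M.
Hypothesis B_bflip : forall x y M, is_pairing (bxor x y) M ->
  forall S, S \in M -> B x y M = B (bflip S x) (bflip S y) M.

Lemma B_eq0_bflip x y M S :
  is_pairing (bxor x y) M -> S \in M ->
  f (bflip S x) * f (bflip S y) = 0 -> B x y M = 0.
Proof.
move=> pairM SM; rewrite (B_bflip pairM SM) fmul_sumB => sum_eq0.
apply: (psumr_eq0P _ sum_eq0) => [N|]; first exact: B_ge0.
by rewrite bxor_bflip.
Qed.

Lemma fmul_eq_B x y x' y' :
  bxor x y = bxor x' y' ->
  (forall M, is_pairing (bxor x y) M -> B x y M = B x' y' M) ->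
  f x * f y = f x' * f y'.
Proof.
move=> xor_eq B_eq; rewrite !fmul_sumB -xor_eq.
by apply: eq_bigr => M /B_eq.
Qed.

End Winding.

Definition o0 : 'I_4 := @Ordinal 4 0 isT.
Definition o1 : 'I_4 := @Ordinal 4 1 isT.
Definition o2 : 'I_4 := @Ordinal 4 2 isT.
Definition o3 : 'I_4 := @Ordinal 4 3 isT.

Lemma ord4P (i : 'I_4) : [\/ i = o0, i = o1, i = o2 | i = o3].
Proof.
case: i => [[|[|[|[|//]]]] lt_i4];
  [constructor 1 | constructor 2 | constructor 3 | constructor 4]; exact: val_inj.
Qed.

Lemma bits4_eq a1 a2 a3 a4 b1 b2 b3 b4 :
  (bits4 a1 a2 a3 a4 == bits4 b1 b2 b3 b4) =
  [&& a1 == b1, a2 == b2, a3 == b3 & a4 == b4].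
Proof.
apply/eqP/and4P => [E | [/eqP-> /eqP-> /eqP-> /eqP->] //].
have coord i := congr1 (fun z : bvec 'I_4 => z i) E.
move: (coord o0) (coord o1) (coord o2) (coord o3); rewrite !ffunE /= => -> -> -> ->.
by rewrite !eqxx.
Qed.

Lemma bxor_bits4 a1 a2 a3 a4 b1 b2 b3 b4 :
  bxor (bits4 a1 a2 a3 a4) (bits4 b1 b2 b3 b4) =
  bits4 (a1 (+) b1) (a2 (+) b2) (a3 (+) b3) (a4 (+) b4).
Proof. by apply/ffunP => i; rewrite !ffunE; case: (ord4P i) => ->. Qed.

Lemma bflip_bits4 S b1 b2 b3 b4 :
  bflip S (bits4 b1 b2 b3 b4) =
  bits4 (b1 (+) (o0 \in S)) (b2 (+) (o1 \in S)) (b3 (+) (o2 \in S)) (b4 (+) (o3 \in S)).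
Proof.
apply/ffunP => i; rewrite !ffunE.
by case: (ord4P i) => -> /=; case: (_ \in S); rewrite ?addbT ?addbF.
Qed.

Section FstarWinding.
Variables (R : realType) (a c : R).
Variable B : bvec 'I_4 -> bvec 'I_4 -> {set {set 'I_4}} -> R.
Hypothesis B_ge0 : forall x y M, is_pairing (bxor x y) M -> 0 <= B x y M.
Hypothesis fmul_sumB : forall x y,
  fstar a c x * fstar a c y = \sum_(M | is_pairing (bxor x y) M) B x y M.
Hypothesis B_bflip : forall x y M, is_pairing (bxor x y) M ->
  forall S, S \in M -> B x y M = B (bflip S x) (bflip S y) M.

Let u := bits4 false false true true.
Let v := bits4 true true false false.
Let u' := bits4 false true false true.
Let v' := bits4 true false true false.

Lemma bxor_uv : bxor u v = bxor u' v'.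
Proof. by rewrite !bxor_bits4. Qed.

Lemma fstar_B_eq M : is_pairing (bxor u v) M -> B u v M = B u' v' M.
Proof.
move=> pairM; have pairM' : is_pairing (bxor u' v') M by rewrite -bxor_uv.
have [T TM T1] : exists2 T, T \in M & o1 \in T.
  by apply: (pairing_block pairM); rewrite bxor_bits4 ffunE.
have B_eq0 := B_eq0_bflip B_ge0 fmul_sumB B_bflip.
rewrite /u /v /u' /v' in pairM pairM' *.
case T0: (o0 \in T); case T2: (o2 \in T); case T3: (o3 \in T);
  try by rewrite (B_eq0 _ _ _ _ pairM TM) ?(B_eq0 _ _ _ _ pairM' TM) //
         !bflip_bits4 T0 T1 T2 T3 /fstar !bits4_eq /= ?mul0r ?mulr0.
(* The blocks left are T = [set: 'I_4] and T = [set o1; o2]. *)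
- suff TT : T = setT by have := pairing_card_block pairM TM; rewrite TT cardsT card_ord.
  by apply/setP => i; rewrite inE; case: (ord4P i) => ->.
- by rewrite (B_bflip pairM TM) !bflip_bits4 T0 T1 T2 T3.
Qed.

Lemma fstar_winding_sqr : a ^+ 2 = c ^+ 2.
Proof.
have fstar_uv : fstar a c u * fstar a c v = fstar a c u' * fstar a c v'.
  exact: (fmul_eq_B fmul_sumB bxor_uv fstar_B_eq).
by move: fstar_uv; rewrite /u /v /u' /v' /fstar !bits4_eq /= -!expr2.
Qed.

End FstarWinding.

Theorem proposition2 (R : realType) (a c : R) :
  0 <= a -> 0 <= c -> a != c -> ~ windable (@fstar R a c).
Proof.
move=> a_ge0 c_ge0 neq_ac [B [B_ge0 fmul_sumB B_bflip]].
have /eqP := fstar_winding_sqr B_ge0 fmul_sumB B_bflip.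
by rewrite eqrXn2 // (negPf neq_ac).
Qed.
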